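(* There exists a continuous, $2$-periodic matrix function $A:\mathbb{R}\to\mathbb{R}^{2\times 2}$, with positive off-diagonal entries and with principal eigenvalue equal to $-\tfrac12$ for every $t$, such that for every continuous function $a:[0,\infty)\to\mathbb{R}$ with $0<a(t)<\tfrac14$ for all $t\ge0$ (in particular for non-periodic ones, e.g. $a(t)=\tfrac1{16}(2+\sin t+\sin(\sqrt2\,t))$), the matrices $\hat A(t)=A(t)+a(t)I$ have positive off-diagonal entries and principal eigenvalue $-\tfrac12+a(t)<-\tfrac14$ for all $t\ge0$, and the system $y'=\hat A(t)y$ has a solution $v(t)$ with $\|v(2k)\|\to\infty$ as $k\to\infty$ ($k\in\mathbb{N}$).
   Context: A $2\times2$ real matrix with positive off-diagonal entries has two distinct real eigenvalues; the larger is called its principal eigenvalue. $I$ is the $2\times 2$ identity matrix and $\|\cdot\|$ the Euclidean norm on $\mathbb{R}^2$. *)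

From Stdlib Require Import Reals.
From mathcomp Require Import all_boot all_algebra.
From mathcomp Require Import Rstruct.

Set Implicit Arguments.
Unset Strict Implicit.
Unset Printing Implicit Defensive.

Definition i0 : 'I_2 := ord0.
Definition i1 : 'I_2 := ord_max.

Definition offdiag_pos (M : 'M[R]_2) : Prop :=
  (0 < M i0 i1)%R /\ (0 < M i1 i0)%R.

Definition principal_eigenvalue (M : 'M[R]_2) (l : R) : Prop :=
  eigenvalue M l /\ (forall m : R, eigenvalue M m -> (m <= l)%R).

Definition norm2 (v : 'cV[R]_2) : R :=
  sqrt (Rsqr (v i0 ord0) + Rsqr (v i1 ord0)).

Definition continuous_on_nonneg (f : R -> R) : Prop :=
  forall t, (0 <= t)%R -> forall eps, (0 < eps)%R ->
    exists d, (0 < d)%R /\ forall s, (0 <= s)%R -> (Rabs (s - t) < d)%R ->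
      (Rabs (f s - f t) < eps)%R.

Definition deriv_on_nonneg (f f' : R -> R) : Prop :=
  forall t, (0 <= t)%R -> forall eps, (0 < eps)%R ->
    exists d, (0 < d)%R /\ forall s, (0 <= s)%R -> s <> t -> (Rabs (s - t) < d)%R ->
      (Rabs ((f s - f t) / (s - t) - f' t) < eps)%R.

Definition solves_on_nonneg (B : R -> 'M[R]_2) (v : R -> 'cV[R]_2) : Prop :=
  forall i : 'I_2, deriv_on_nonneg (fun t => v t i ord0)
                                   (fun t => ((B t *m v t)%R i ord0)).

(* The matrix A is reverse-engineered from an explicit solution
   w(t) = e^(t/2) (e^(phi1 t), e^(phi2 t)) with 2-periodic phi1, phi2: its entries make w
   solve y' = A y, while det (A + 1/2) = 0 and tr A < -1 make -1/2 the principal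
   eigenvalue at every t although w grows like e^(t/2).  Adding a(t) I multiplies solutions
   by exp (int_0^t a) >= 1, so exp (int_0^t a) w(t) solves the perturbed system and its
   norm at t = 2k is at least e^(k + 3/PI). *)

From Stdlib Require Import Reals Lra.
From mathcomp Require Import all_boot all_algebra.
From mathcomp Require Import Rstruct.
From Coquelicot Require Import Coquelicot.

Import GRing.Theory.

Open Scope R_scope.

(* Turn MathComp operations on [R] back into Stdlib ones; the [change] is needed because
   Stdlib [ring] only recognises equalities stated at type [R] syntactically. *)
Ltac Rstd :=
  rewrite -?R0E -?R1E -?RminusE -?RplusE -?RdivE -?RmultE -?RoppE -?RinvE;
  try match goal with |- ?x = ?y => change (@eq R x y) end.

Lemma natrE n : (n%:R)%R = IZR (Z.of_nat n) :> R. Proof. by rewrite -INRE INR_IZR_INZ. Qed.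

Lemma ord2_cases (i : 'I_2) : i = i0 \/ i = i1.
Proof. by case: i => [[|[|//]]] ?; [left | right]; apply/val_inj. Qed.

Lemma big_ord2 (F : 'I_2 -> R) : (\sum_(k < 2) F k)%R = F i0 + F i1.
Proof.
rewrite big_ord_recr big_ord1 /= RplusE.
by congr (F _ + F _)%R; apply/val_inj.
Qed.

Lemma mulmx_cV2 (M : 'M[R]_2) (w : 'cV[R]_2) i :
  (M *m w)%R i ord0 = M i i0 * w i0 ord0 + M i i1 * w i1 ord0.
Proof. by rewrite mxE big_ord2. Qed.

Lemma mulmx_rV2 (w : 'rV[R]_2) (M : 'M[R]_2) j :
  (w *m M)%R ord0 j = w ord0 i0 * M i0 j + w ord0 i1 * M i1 j.
Proof. by rewrite mxE big_ord2. Qed.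

Lemma eigenvalue_add_scalar (F : fieldType) n (M : 'M[F]_n) (c m : F) :
  eigenvalue (M + c%:M)%R m = eigenvalue M (m - c)%R.
Proof.
apply/eigenvalueP/eigenvalueP => -[v vM v_nz]; exists v => //.
  by rewrite scalerBl -vM mulmxDr mul_mx_scalar addrK.
by rewrite mulmxDr vM mul_mx_scalar -scalerDl subrK.
Qed.

Lemma eigenvalue_mx2_char (M : 'M[R]_2) m :
  eigenvalue M m -> (M i0 i0 - m) * (M i1 i1 - m) = M i0 i1 * M i1 i0.
Proof.
move=> /eigenvalueP [v vM v_nz].
have E j : v ord0 i0 * M i0 j + v ord0 i1 * M i1 j = m * v ord0 j.
  by rewrite -mulmx_rV2 vM mxE.
have E0 := E i0; have E1 := E i1.
set x := v ord0 i0 in E0 E1; set y := v ord0 i1 in E0 E1.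
set d := (M i0 i0 - m) * (M i1 i1 - m) - M i0 i1 * M i1 i0.
have dx : d * x = 0.
  have -> : d * x = (M i1 i1 - m) * (x * M i0 i0 + y * M i1 i0 - m * x)
                    - M i1 i0 * (x * M i0 i1 + y * M i1 i1 - m * y) by rewrite /d; ring.
  by rewrite E0 E1; ring.
have dy : d * y = 0.
  have -> : d * y = (M i0 i0 - m) * (x * M i0 i1 + y * M i1 i1 - m * y)
                    - M i0 i1 * (x * M i0 i0 + y * M i1 i0 - m * x) by rewrite /d; ring.
  by rewrite E0 E1; ring.
have xy_nz : x * x + y * y <> 0.
  move=> xy0; apply/negP: v_nz; apply/negPn/eqP/matrixP => i j.
  rewrite [i]ord1 !mxE; Rstd; case: (ord2_cases j) => ->; rewrite -/x -/y; nra.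
suff /Rmult_integral [d0 | //] : d * (x * x + y * y) = 0 by move: d0; rewrite /d; lra.
by rewrite Rmult_plus_distr_l -!Rmult_assoc dx dy; ring.
Qed.

Lemma char_mx2_eigenvalue (M : 'M[R]_2) m : M i1 i0 <> 0 ->
  (M i0 i0 - m) * (M i1 i1 - m) = M i0 i1 * M i1 i0 -> eigenvalue M m.
Proof.
move=> M10_nz char; apply/eigenvalueP.
exists (\row_j (if j == i0 then M i1 i0 else m - M i0 i0))%R.
  apply/matrixP => i j; rewrite [i]ord1 mulmx_rV2 !mxE /=.
  by case: (ord2_cases j) => -> /=; Rstd; nra.
by apply/eqP => /matrixP /(_ ord0 i0); rewrite !mxE.
Qed.

Lemma principal_eigenvalue_mx2 (M : 'M[R]_2) l : M i1 i0 <> 0 ->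
  (M i0 i0 - l) * (M i1 i1 - l) = M i0 i1 * M i1 i0 ->
  M i0 i0 + M i1 i1 < 2 * l -> principal_eigenvalue M l.
Proof.
move=> M10_nz char_l tr_lt; split; first exact: char_mx2_eigenvalue.
move=> m /eigenvalue_mx2_char char_m; apply/RleP.
(* the other root of the characteristic polynomial is [tr M - l < l] *)
have : (m - l) * (m - (M i0 i0 + M i1 i1 - l)) = 0 by nra.
by case/Rmult_integral; lra.
Qed.

Lemma principal_eigenvalue_add_scalar (M : 'M[R]_2) l c :
  principal_eigenvalue M l -> principal_eigenvalue (M + c%:M)%R (l + c).
Proof.
move=> [l_eig l_max]; split; first by rewrite eigenvalue_add_scalar -RminusE Rplus_minus_r.
move=> m; rewrite eigenvalue_add_scalar => /l_max /RleP.
by rewrite -RminusE => ?; apply/RleP; lra.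
Qed.

Lemma offdiag_pos_add_scalar (M : 'M[R]_2) c :
  offdiag_pos M -> offdiag_pos (M + c%:M)%R.
Proof. by rewrite /offdiag_pos !mxE /= !addr0. Qed.

Lemma deriv_on_nonneg_is_derive (f f' : R -> R) :
  (forall t, 0 <= t -> is_derive f t (f' t)) -> deriv_on_nonneg f f'.
Proof.
move=> f_der t /RleP t_ge0 eps /RltP eps_gt0.
have [delta f_quot] := proj1 (is_derive_Reals f t (f' t)) (f_der t t_ge0) eps eps_gt0.
exists (pos delta); split; first by apply/RltP; apply: cond_pos.
move=> s _ s_neq_t /RltP s_near; apply/RltP.
have := f_quot (s - t); rewrite Rplus_minus.
by apply; [lra | exact: s_near].
Qed.

Definition solves_at (B : R -> 'M[R]_2) (v : R -> 'cV[R]_2) (t : R) : Prop :=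
  forall i : 'I_2, is_derive (fun s => v s i ord0) t ((B t *m v t)%R i ord0).

Lemma solves_on_nonneg_at B v :
  (forall t, 0 <= t -> solves_at B v t) -> solves_on_nonneg B v.
Proof. by move=> v_sol i; apply: deriv_on_nonneg_is_derive => t /v_sol. Qed.

Lemma solves_at_add_scalar B w (F a : R -> R) t :
  solves_at B w t -> is_derive F t (a t) ->
  solves_at (fun s => B s + (a s)%:M)%R (fun s => exp (F s) *: w s)%R t.
Proof.
move=> w_sol F_der i.
have expF_der := is_derive_comp exp F t _ _ (is_derive_exp (F t)) F_der.
have D := is_derive_mult _ _ t _ _ expF_der (w_sol i) Rmult_comm.
have -> : ((B t + (a t)%:M) *m (exp (F t) *: w t))%R i ord0
        = a t * exp (F t) * w t i ord0 + exp (F t) * (B t *m w t)%R i ord0.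
  rewrite mulmxDl mul_scalar_mx -scalemxAr; move: (B t *m w t)%R => Bw.
  by rewrite !mxE; Rstd; move: (w t i ord0) (Bw i ord0) => x y; ring.
by apply: is_derive_ext D => s; rewrite mxE.
Qed.

Lemma continuous_extend_const (a : R -> R) :
  continuous_on_nonneg a -> forall x, continuous (fun s => a (Rmax 0 s)) x.
Proof.
move=> a_cont x; apply/continuity_pt_filterlim/continuity_pt_locally => eps.
have max_ge0 s : (0 <= Rmax 0 s)%R by apply/RleP; apply: Rmax_l.
have /RltP eps_gt0 := cond_pos eps.
have [d [/RltP d_gt0 a_near]] := a_cont _ (max_ge0 x) _ eps_gt0.
exists (mkposreal d d_gt0) => y /= y_near; apply/RltP/a_near => //; apply/RltP.
have : Rabs (Rmax 0 y - Rmax 0 x) <= Rabs (y - x).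
  by rewrite /Rmax; do 2 case: Rle_dec => ?; split_Rabs; lra.
by move: y_near; rewrite /ball /= /AbsRing_ball /abs /minus /plus /opp /= -/(Rminus y x); lra.
Qed.

(* [a] is only given on [0, +oo); extending it by [a 0] to the left makes the
   two-sided derivative of the integral available. *)
Definition prim (a : R -> R) (t : R) : R := RInt (fun s => a (Rmax 0 s)) 0 t.

Lemma is_derive_prim a t : continuous_on_nonneg a -> 0 <= t ->
  is_derive (prim a) t (a t).
Proof.
move=> a_cont t_ge0; rewrite -{2}(Rmax_right 0 t t_ge0).
apply: (is_derive_RInt (fun s => a (Rmax 0 s)) _ 0); last exact: continuous_extend_const.
apply: filter_forall => b; apply: RInt_correct.
by apply: ex_RInt_continuous => z _; apply: continuous_extend_const.
Qed.

Lemma prim_ge0 a t : continuous_on_nonneg a -> (forall s, 0 <= s -> 0 <= a s) ->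
  0 <= t -> 0 <= prim a t.
Proof.
move=> a_cont a_ge0 t_ge0; apply: RInt_ge_0 => //.
  by apply: ex_RInt_continuous => z _; apply: continuous_extend_const.
by move=> s _; apply/a_ge0/Rmax_l.
Qed.

Lemma norm2_ge_head (v : 'cV[R]_2) : v i0 ord0 <= norm2 v.
Proof.
apply: Rle_trans (Rle_abs _) _; rewrite -sqrt_Rsqr_abs /norm2.
by apply: sqrt_le_1_alt; have := Rle_0_sqr (v i1 ord0); lra.
Qed.

Definition sinpi (t : R) : R := sin (PI * t).
Definition cospi (t : R) : R := cos (PI * t).

Lemma sinpi_bound t : -1 <= sinpi t <= 1. Proof. exact: SIN_bound. Qed.

Lemma cospi_sqr t : cospi t * cospi t = 1 - sinpi t * sinpi t.
Proof. by have := sin2_cos2 (PI * t); rewrite /Rsqr /sinpi /cospi; lra. Qed.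

Lemma sinpi_cospi_periodic t : sinpi (t + 2) = sinpi t /\ cospi (t + 2) = cospi t.
Proof.
rewrite /sinpi /cospi (_ : PI * (t + 2) = PI * t + 2 * INR 1 * PI); last by rewrite /=; ring.
by rewrite sin_period cos_period.
Qed.

Lemma sinpi_cospi_even (k : nat) : sinpi (2 * INR k) = 0 /\ cospi (2 * INR k) = 1.
Proof.
rewrite /sinpi /cospi (_ : PI * (2 * INR k) = 0 + 2 * INR k * PI); last by ring.
by rewrite sin_period cos_period sin_0 cos_0.
Qed.

Definition a11 t := 2 * (sinpi t * sinpi t) + sinpi t - 13/2.
Definition a12 t := (6 - 4 * sinpi t) * exp (6 / PI * cospi t).
Definition a21 t := (6 + 7 * sinpi t + 2 * (sinpi t * sinpi t)) * exp (- (6 / PI * cospi t)).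
Definition a22 t := -13/2 - 4 * sinpi t.

Definition Amat (t : R) : 'M[R]_2 :=
  (\matrix_(i, j) if i == i0 then (if j == i0 then a11 t else a12 t)
                  else (if j == i0 then a21 t else a22 t))%R.

Lemma Amat_entries t :
  [/\ Amat t i0 i0 = a11 t, Amat t i0 i1 = a12 t, Amat t i1 i0 = a21 t & Amat t i1 i1 = a22 t].
Proof. by rewrite !mxE. Qed.

Lemma Amat_periodic t : Amat (t + 2) = Amat t.
Proof.
by have [s_per c_per] := sinpi_cospi_periodic t; rewrite /Amat /a11 /a12 /a21 /a22 s_per c_per.
Qed.

Lemma Amat_continuous i j : continuity (fun t => Amat t i j).
Proof.
have cont_of_derive f : (forall t, ex_derive f t) -> continuity f.
  by move=> f_der t; apply/continuity_pt_filterlim/ex_derive_continuous.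
apply: (continuity_eq (f := fun t => if i == i0 then (if j == i0 then a11 t else a12 t)
                                     else (if j == i0 then a21 t else a22 t))).
  by move=> t; rewrite mxE.
case: (ord2_cases i) => ->; case: (ord2_cases j) => -> /=; apply: cont_of_derive => t;
  rewrite /a11 /a12 /a21 /a22 /sinpi /cospi; auto_derive; done.
Qed.

Lemma a12_gt0 t : 0 < a12 t.
Proof. by have := sinpi_bound t; rewrite /a12 => ?; apply: Rmult_lt_0_compat; [lra | apply: exp_pos]. Qed.

Lemma a21_gt0 t : 0 < a21 t.
Proof. by have := sinpi_bound t; rewrite /a21 => ?; apply: Rmult_lt_0_compat; [nra | apply: exp_pos]. Qed.

Lemma Amat_offdiag_pos t : offdiag_pos (Amat t).
Proof.
rewrite /offdiag_pos; have [_ -> -> _] := Amat_entries t.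
by split; apply/RltP; [apply: a12_gt0 | apply: a21_gt0].
Qed.

Lemma Amat_principal_eigenvalue t : principal_eigenvalue (Amat t) (- (1/2)).
Proof.
have [A00 A01 A10 A11] := Amat_entries t; have := sinpi_bound t => s_bd.
apply: principal_eigenvalue_mx2; rewrite ?A00 ?A01 ?A10 ?A11.
- exact/Rgt_not_eq/a21_gt0.
- have exp_inv : exp (6 / PI * cospi t) * exp (- (6 / PI * cospi t)) = 1.
    by rewrite -exp_plus Rplus_opp_r exp_0.
  rewrite /a11 /a12 /a21 /a22.
  transitivity ((6 - 4 * sinpi t) * (6 + 7 * sinpi t + 2 * (sinpi t * sinpi t))
     * (exp (6 / PI * cospi t) * exp (- (6 / PI * cospi t)))); last by ring.
  by rewrite exp_inv; field.
- by rewrite /a11 /a22; nra.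
Qed.

Definition phi1 t := (3 - sinpi t) * cospi t / PI.
Definition phi2 t := - (3 + sinpi t) * cospi t / PI.

Definition wsol (t : R) : 'cV[R]_2 :=
  (\col_i exp (t / 2 + if i == i0 then phi1 t else phi2 t))%R.

Lemma wsol_entries t :
  wsol t i0 ord0 = exp (t / 2 + phi1 t) /\ wsol t i1 ord0 = exp (t / 2 + phi2 t).
Proof. by rewrite !mxE. Qed.

(* The exponential factors in [a12], [a21] are exactly the ratios of the two components. *)
Lemma wsol_ratio t :
  a12 t * exp (t / 2 + phi2 t) = (6 - 4 * sinpi t) * exp (t / 2 + phi1 t) /\
  a21 t * exp (t / 2 + phi1 t) = (6 + 7 * sinpi t + 2 * (sinpi t * sinpi t)) * exp (t / 2 + phi2 t).
Proof.
rewrite /a12 /a21 !Rmult_assoc -!exp_plus /phi1 /phi2.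
by split; congr (_ * exp _); field; apply: PI_neq0.
Qed.

Lemma wsol_solves t : solves_at Amat wsol t.
Proof.
have [A00 A01 A10 A11] := Amat_entries t; have [w0 w1] := wsol_entries t.
have [r12 r21] := wsol_ratio t; have c2 := cospi_sqr t.
move=> i; rewrite mulmx_cV2; case: (ord2_cases i) => ->.
- rewrite A00 A01 w0 w1 r12 -Rmult_plus_distr_r.
  apply: (is_derive_ext (fun s => exp (s / 2 + phi1 s))) => [s | ].
    by have [-> _] := wsol_entries s.
  rewrite /phi1 /a11 /sinpi /cospi in c2 *; auto_derive; first done.
  congr (_ * _); field_simplify_eq; last exact: PI_neq0.
  by rewrite -!Rsqr_pow2 /Rsqr c2; ring.
- rewrite A10 A11 w0 w1 r21 -Rmult_plus_distr_r.
  apply: (is_derive_ext (fun s => exp (s / 2 + phi2 s))) => [s | ].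
    by have [_ ->] := wsol_entries s.
  rewrite /phi2 /a22 /sinpi /cospi in c2 *; auto_derive; first done.
  congr (_ * _); field_simplify_eq; last exact: PI_neq0.
  by rewrite -!Rsqr_pow2 /Rsqr c2; ring.
Qed.

Lemma wsol_even (k : nat) : wsol (2 * INR k) i0 ord0 = exp (INR k + 3 / PI).
Proof.
have [-> _] := wsol_entries (2 * INR k); have [s0 c1] := sinpi_cospi_even k.
by rewrite /phi1 s0 c1; congr exp; field; exact: PI_neq0.
Qed.

Lemma cv_infty_norm2_scaled_wsol (F : R -> R) : (forall t, 0 <= t -> 0 <= F t) ->
  cv_infty (fun k : nat => norm2 (exp (F (2 * INR k)%R) *: wsol (2 * INR k)%R)%R).
Proof.
move=> F_ge0; apply/is_lim_seq_p_infty_Reals/(is_lim_seq_le_p_loc INR); last exact: is_lim_seq_INR.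
exists 0%N => k _; rewrite -RmultE natrE /=.
apply: Rle_trans (norm2_ge_head _); rewrite mxE wsol_even.
have k_ge0 := pos_INR k; have := F_ge0 (2 * INR k) ltac:(lra).
have := exp_ineq1_le (F (2 * INR k)); have := exp_ineq1_le (INR k + 3 / PI).
have : 0 < 3 / PI by apply: Rdiv_lt_0_compat; [lra | exact: PI_RGT_0].
by Rstd; nra.
Qed.

Theorem mainTheorem3 :
  exists A : R -> 'M[R]_2,
    (forall i j : 'I_2, continuity (fun t => A t i j)) /\
    (forall t : R, A (t + 2)%R = A t) /\
    (forall t : R, offdiag_pos (A t)) /\
    (forall t : R, principal_eigenvalue (A t) (- (1/2))%R) /\
    forall a : R -> R,
      continuous_on_nonneg a ->
      (forall t : R, (0 <= t)%R -> (0 < a t < 1/4)%R) ->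
      let Ahat := fun t => (A t + (a t)%:M)%R in
      (forall t : R, (0 <= t)%R ->
         offdiag_pos (Ahat t) /\
         principal_eigenvalue (Ahat t) (- (1/2) + a t)%R /\
         (- (1/2) + a t < - (1/4))%R) /\
      exists v : R -> 'cV[R]_2,
        solves_on_nonneg Ahat v /\
        cv_infty (fun k : nat => norm2 (v (2 * INR k)%R)).
Proof.
have half_mcE : (- (1/2))%R = - (1/2) :> R by rewrite -R1E natrE.
exists Amat; split; first exact: Amat_continuous.
split; first by move=> t; rewrite natrE; exact: Amat_periodic.
split; first exact: Amat_offdiag_pos.
split; first by move=> t; rewrite half_mcE; exact: Amat_principal_eigenvalue.
move=> a a_cont a_bd Ahat.
have a_range t : 0 <= t -> 0 < a t < 1/4.
  by move=> /RleP /a_bd /andP [/RltP + /RltP]; rewrite natrE /=; Rstd; lra.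
split.
  move=> t /RleP t_ge0; split; [|split].
  - exact/offdiag_pos_add_scalar/Amat_offdiag_pos.
  - rewrite half_mcE; exact/principal_eigenvalue_add_scalar/Amat_principal_eigenvalue.
  - by apply/RltP; rewrite !natrE /=; Rstd; have := a_range t t_ge0; lra.
exists (fun t => exp (prim a t) *: wsol t)%R; split.
  apply: solves_on_nonneg_at => t t_ge0.
  by apply: solves_at_add_scalar; [exact: wsol_solves | exact: is_derive_prim].
apply: cv_infty_norm2_scaled_wsol => t t_ge0.
by apply: prim_ge0 => // s /a_range [] /Rlt_le.
Qed.
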